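(* For every integer $k \geq 1$, let $\mathcal{b}(k)$ denote the greatest common divisor of all the sums $\sum_{i=1}^{k} b_{n+i}$, $n \geq 0$. Then $$\mathcal{b}(k) = \begin{cases} \gcd\!\left(\tfrac12(B_k - k),\, P_k\right), & \text{if } k \text{ is even};\\ \gcd\!\left(\tfrac12(B_k - k),\, 2Q_k\right), & \text{if } k \text{ is odd}.\end{cases}$$
   Context: The Pell sequence $(P_n)_{n\ge0}$ is defined by $P_0=0$, $P_1=1$, $P_n = 2P_{n-1}+P_{n-2}$. The associated Pell sequence $(Q_n)_{n\ge0}$ is defined by $Q_0=1$, $Q_1=1$, $Q_n=2Q_{n-1}+Q_{n-2}$. The balancing sequence $(B_n)_{n\ge0}$ is defined by $B_0=0$, $B_1=1$, $B_n=6B_{n-1}-B_{n-2}$. The cobalancing sequence $(b_n)_{n\ge0}$ is defined by $b_0=0$, $b_1=0$, $b_n=6b_{n-1}-b_{n-2}+2$. *)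

From mathcomp Require Import all_boot all_order all_algebra.
Set Implicit Arguments. Unset Strict Implicit. Unset Printing Implicit Defensive.
Import Order.TTheory GRing.Theory Num.Theory.
Local Open Scope ring_scope.

Fixpoint pell (n : nat) : int :=
  match n with
  | 0%N => 0
  | 1%N => 1
  | (m.+1 as n1).+1 => 2 * pell n1 + pell m
  end.

Fixpoint apell (n : nat) : int :=
  match n with
  | 0%N => 1
  | 1%N => 1
  | (m.+1 as n1).+1 => 2 * apell n1 + apell m
  end.

Fixpoint bal (n : nat) : int :=
  match n with
  | 0%N => 0
  | 1%N => 1
  | (m.+1 as n1).+1 => 6 * bal n1 - bal m
  end.

Fixpoint cobal (n : nat) : int :=
  match n with
  | 0%N => 0
  | 1%N => 0
  | (m.+1 as n1).+1 => 6 * cobal n1 - cobal m + 2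
  end.

Definition cobal_window (k n : nat) : int := \sum_(1 <= i < k.+1) cobal (n + i).

Definition is_gcd_of (S : int -> Prop) (d : int) : Prop :=
  0 <= d /\ (forall x, S x -> (d %| x)%Z) /\
  (forall e : int, (forall x, S x -> (e %| x)%Z) -> (e %| d)%Z).

(* The window sums S_n = b_{n+1} + ... + b_{n+k} satisfy
   S_{n+2} = 6 S_{n+1} - S_n + 2k, so their common divisors are exactly the
   common divisors of S_0, S_1 - S_0 = b_{k+1} and 2k.  With P = P_k, Q = Q_k
   one has 2 S_0 = B_k - k = P Q - k, and the Cassini identity
   Q^2 - 2 P^2 = (-1)^k factors b_{k+1} as P_k Q_{k+1} for even k and as
   P_{k+1} Q_k for odd k.  Explicit integer combinations then identify the
   ideal (S_0, b_{k+1}, 2k) with (S_0, P) for even k and (S_0, 2Q) for odd k. *)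
From mathcomp Require Import all_boot all_order all_algebra.
From mathcomp Require Import ring.
Import Order.TTheory GRing.Theory Num.Theory.
Local Open Scope ring_scope.

Lemma nat_ind2 (P : nat -> Prop) :
  P 0%N -> P 1%N -> (forall n, P n -> P n.+1 -> P n.+2) -> forall n, P n.
Proof.
move=> P0 P1 PSS n; suff: P n /\ P n.+1 by case.
by elim: n => [|n [Pn Pn1]]; split; last exact: PSS.
Qed.

Lemma is_gcd_of_seq (u : nat -> int) (d : int) : 0 <= d ->
  (forall e, (forall n, (e %| u n)%Z) <-> (e %| d)%Z) ->
  is_gcd_of (fun x => exists n, x = u n) d.
Proof.
move=> d_ge0 dvd_u; split; first exact: d_ge0.
split=> [_ [n ->]|e e_dvd]; first exact: (dvd_u d).2 (dvdzz d) n.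
by apply/dvd_u => n; apply: e_dvd; exists n.
Qed.

Lemma dvdz_rec2 {u : nat -> int} {a b c : int} :
  (forall n, u n.+2 = a * u n.+1 + b * u n + c) ->
  forall e, (forall n, (e %| u n)%Z) <->
            [/\ (e %| u 0%N)%Z, (e %| u 1%N)%Z & (e %| c)%Z].
Proof.
move=> u_rec e; split=> [e_dvd | [e_u0 e_u1 e_c]].
  have -> : c = u 2%N - a * u 1%N - b * u 0%N by rewrite u_rec; ring.
  by rewrite !rpredB ?dvdz_mull.
by elim/nat_ind2 => // n e_un e_un1; rewrite u_rec !rpredD ?dvdz_mull.
Qed.

Lemma pellSS n : pell n.+2 = 2 * pell n.+1 + pell n. Proof. by []. Qed.
Lemma apellSS n : apell n.+2 = 2 * apell n.+1 + apell n. Proof. by []. Qed.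
Lemma balSS n : bal n.+2 = 6 * bal n.+1 - bal n. Proof. by []. Qed.
Lemma cobalSS n : cobal n.+2 = 6 * cobal n.+1 - cobal n + 2. Proof. by []. Qed.

Lemma pell_apellS n :
  pell n.+1 = pell n + apell n /\ apell n.+1 = apell n + 2 * pell n.
Proof.
elim/nat_ind2: n => // n [pellSn apellSn] _.
by split; rewrite !pellSS !apellSS pellSn apellSn; ring.
Qed.

Lemma pellS n : pell n.+1 = pell n + apell n.
Proof. by case: (pell_apellS n). Qed.

Lemma apellS n : apell n.+1 = apell n + 2 * pell n.
Proof. by case: (pell_apellS n). Qed.

Lemma bal_pell n : bal n = pell n * apell n.
Proof.
elim/nat_ind2: n => // n IHn IHn1.
by rewrite balSS IHn IHn1 !(pellS, apellS); ring.
Qed.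

Lemma pell_cassini n : apell n ^+ 2 - 2 * pell n ^+ 2 = (-1) ^+ n.
Proof.
by elim: n => // n IHn; rewrite pellS apellS [(-1) ^+ n.+1]exprS -IHn; ring.
Qed.

Lemma cobalS_bal n : 2 * cobal n.+1 = bal n.+1 - bal n - 1.
Proof.
elim/nat_ind2: n => // n IHn IHn1.
rewrite cobalSS mulrDr mulrBr mulrCA IHn1 IHn.
by rewrite [bal n.+3]balSS [bal n.+2]balSS; ring.
Qed.

Lemma cobalS_even n : ~~ odd n -> cobal n.+1 = pell n * apell n.+1.
Proof.
move=> n_even; apply: (@mulfI _ 2) => //; apply/eqP; rewrite -subr_eq0.
rewrite cobalS_bal !bal_pell pellS apellS.
rewrite (_ : _ - _ = apell n ^+ 2 - 2 * pell n ^+ 2 - 1); last ring.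
by rewrite pell_cassini -signr_odd (negbTE n_even) subrr.
Qed.

Lemma cobalS_odd n : odd n -> cobal n.+1 = pell n.+1 * apell n.
Proof.
move=> n_odd; apply: (@mulfI _ 2) => //; apply/eqP; rewrite -subr_eq0.
rewrite cobalS_bal !bal_pell pellS apellS.
rewrite (_ : _ - _ = - (apell n ^+ 2 - 2 * pell n ^+ 2 + 1)); last ring.
by rewrite pell_cassini -signr_odd n_odd addNr oppr0.
Qed.

Lemma dvd2_pell_even n : ~~ odd n -> (2 %| pell n)%Z.
Proof.
elim/nat_ind2: n => // n IHn _; rewrite [odd _]/= negbK => n_even.
by rewrite pellSS rpredD ?dvdz_mulr ?IHn.
Qed.

Lemma sum_cobal k : 2 * \sum_(1 <= i < k.+1) cobal i = bal k - k%:Z.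
Proof.
elim: k => [|k IHk]; first by rewrite big_geq.
by rewrite big_nat_recr // mulrDr IHk cobalS_bal -addn1 PoszD; ring.
Qed.

Lemma cobal_window1 k : cobal_window k 1 = cobal_window k 0 + cobal k.+1.
Proof.
rewrite /cobal_window -(big_nat_recr _ _ (fun i => cobal (0 + i))) //.
by rewrite big_nat_recl //= add0r.
Qed.

Lemma cobal_windowSS k n :
  cobal_window k n.+2 = 6 * cobal_window k n.+1 + (-1) * cobal_window k n + 2 * k%:Z.
Proof.
rewrite /cobal_window mulN1r.
have -> : \sum_(1 <= i < k.+1) cobal (n.+2 + i) =
    \sum_(1 <= i < k.+1) (6 * cobal (n.+1 + i) - cobal (n + i) + 2).
  by apply: eq_bigr => i _; rewrite !addSn.
rewrite big_split sumrB -mulr_sumr sumr_const_nat subn1.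
by rewrite -[k%:Z]natz mulr_natr.
Qed.

Lemma dvdz_cobal_window k e :
  (forall n, (e %| cobal_window k n)%Z) <->
  [/\ (e %| cobal_window k 0)%Z, (e %| cobal k.+1)%Z & (e %| 2 * k%:Z)%Z].
Proof.
apply: (iff_trans (dvdz_rec2 (cobal_windowSS k) e)).
rewrite cobal_window1; split=> -[e_s e_sb e_2k]; split=> //.
  by rewrite -(rpredDl _ e_s).
by rewrite rpredD.
Qed.

Lemma dvdz_window_even (s k P Q e : int) :
  2 * s = P * Q - k -> Q ^+ 2 - 2 * P ^+ 2 = 1 ->
  [/\ (e %| s)%Z, (e %| P * (Q + 2 * P))%Z & (e %| 2 * k)%Z] <->
  (e %| s)%Z && (e %| P)%Z.
Proof.
move=> two_s cassini; have PQ : P * Q = 2 * s + k by rewrite two_s subrK.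
have cassiniK x : x = x * (Q ^+ 2 - 2 * P ^+ 2) by rewrite cassini mulr1.
split=> [[e_s e_b e_2k] | /andP[e_s e_P]].
  have e_2PQ : (e %| 2 * (P * Q))%Z.
    by rewrite PQ mulrDr; apply: rpredD => //; do 2!apply: dvdz_mull.
  have e_4P2 : (e %| 4 * P ^+ 2)%Z.
    rewrite (_ : 4 * _ = 2 * (P * (Q + 2 * P)) - 2 * (P * Q)); last ring.
    by apply: rpredB => //; apply: dvdz_mull.
  have e_2P : (e %| 2 * P)%Z.
    rewrite [2 * P]cassiniK.
    rewrite (_ : _ * _ = Q * (2 * (P * Q)) - P * (4 * P ^+ 2)); last ring.
    by apply: rpredB; apply: dvdz_mull.
  rewrite e_s [P]cassiniK.
  rewrite (_ : _ * _ = (Q - 2 * P) * (P * (Q + 2 * P)) + P ^+ 2 * (2 * P)); last ring.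
  by apply: rpredD; apply: dvdz_mull.
have -> : 2 * k = 2 * (P * Q) - 2 * (2 * s) by rewrite PQ; ring.
split=> //; first exact: dvdz_mulr.
by apply: rpredB; apply: dvdz_mull; [apply: dvdz_mulr | apply: dvdz_mull].
Qed.

Lemma dvdz_window_odd (s k P Q e : int) :
  2 * s = P * Q - k -> Q ^+ 2 - 2 * P ^+ 2 = -1 -> (2 %| P + Q)%Z ->
  [/\ (e %| s)%Z, (e %| (P + Q) * Q)%Z & (e %| 2 * k)%Z] <->
  (e %| s)%Z && (e %| 2 * Q)%Z.
Proof.
move=> two_s cassini PQ_even; have PQ : P * Q = 2 * s + k by rewrite two_s subrK.
have cassiniK x : x = x * (2 * P ^+ 2 - Q ^+ 2) by rewrite -opprB cassini opprK mulr1.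
split=> [[e_s e_b e_2k] | /andP[e_s e_2Q]].
  have e_2PQ : (e %| 2 * (P * Q))%Z.
    by rewrite PQ mulrDr; apply: rpredD => //; do 2!apply: dvdz_mull.
  rewrite e_s [2 * Q]cassiniK.
  rewrite (_ : _ * _ = (2 * P - 2 * Q) * ((P + Q) * Q) + P * (2 * (P * Q))); last ring.
  by apply: rpredD; apply: dvdz_mull.
have -> : 2 * k = P * (2 * Q) - 2 * (2 * s) by rewrite mulrCA PQ; ring.
have [q ->] := dvdzP PQ_even.
split=> //; first by rewrite -mulrA; apply: dvdz_mull.
by apply: rpredB; apply: dvdz_mull => //; apply: dvdz_mull.
Qed.

Theorem theorem23 (k : nat) (hk : (1 <= k)%N) :
  is_gcd_of (fun x => exists n : nat, x = cobal_window k n)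
    (if ~~ odd k then gcdz ((bal k - k%:Z) %/ 2)%Z (pell k)
     else gcdz ((bal k - k%:Z) %/ 2)%Z (2 * apell k)).
Proof.
have two_s : 2 * cobal_window k 0 = pell k * apell k - k%:Z.
  by rewrite -bal_pell -sum_cobal.
have -> : ((bal k - k%:Z) %/ 2)%Z = cobal_window k 0 by rewrite -sum_cobal mulKz.
apply: is_gcd_of_seq => [|e]; first by case: ifP.
apply: (iff_trans (dvdz_cobal_window k e)).
have cassini := pell_cassini k; rewrite -signr_odd in cassini.
case: ifP => [k_even | /negbFE k_odd]; rewrite dvdz_gcd.
  rewrite cobalS_even // apellS; apply: dvdz_window_even => //.
  by rewrite cassini (negbTE k_even).
rewrite cobalS_odd // pellS; apply: dvdz_window_odd => //.
  by rewrite cassini k_odd.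
by rewrite -pellS dvd2_pell_even //= k_odd.
Qed.
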